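(* Let $A$ be a $\lambda$-term and $v,v'$ variables. If $v'\notin FV(vA)$ and $v,v'\notin BV(A)$, then $A\{v:=v'\}\{v':=v\}=_{\mathcal M}A$. Consequently $\to_{\alpha'}$ and $\twoheadrightarrow_{\alpha'}$ are symmetric relations, and $\twoheadrightarrow_{\alpha'}$ is the same relation as $=_{\alpha'}$ on $\lambda$-terms.
   Context: $\lambda$-terms over an infinite variable set $\mathcal V$: $\mathcal M ::= \mathcal V \mid (\lambda\mathcal V.\mathcal M)\mid(\mathcal M\mathcal M)$; $=_{\mathcal M}$ is syntactic identity. $FV(C)$ is the set of variables with a free occurrence in $C$ (occurrences inside the body of $\lambda v.\cdot$ or as the $v$ of $\lambda v$ are bound); $BV(C)$ is the set of $v$ such that $\lambda v$ occurs in $C$; $FV(vA)=\{v\}\cup FV(A)$. Grafting $A\{v:=B\}$: $v\{v:=B\}=B$; $v'\{v:=B\}=v'$ if $v'\neq v$; $(AC)\{v:=B\}=A\{v:=B\}C\{v:=B\}$; $(\lambda v.A)\{v:=B\}=\lambda v.A$; $(\lambda v'.A)\{v:=B\}=\lambda v'.A\{v:=B\}$ if $v\neq v'$. $\to_{\alpha'}$ is the compatible closure (closure under $A\mapsto AC$, $A\mapsto CA$, $A\mapsto\lambda u.A$) of the rule $\lambda v.A\to_{\alpha'}\lambda v'.A\{v:=v'\}$ whenever $v'\notin FV(vA)$ and $v,v'\notin BV(A)$. $\twoheadrightarrow_{\alpha'}$ is its reflexive transitive closure and $=_{\alpha'}$ its equivalence closure. *)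

From Stdlib Require Import List Relations Relation_Operators.
Import ListNotations.

Definition var := nat.

Inductive term : Type :=
| Var : var -> term
| Lam : var -> term -> term
| App : term -> term -> term.

Fixpoint free_in (v : var) (C : term) : Prop :=
  match C with
  | Var x => x = v
  | Lam x A => x <> v /\ free_in v A
  | App A B => free_in v A \/ free_in v B
  end.

Fixpoint bound_in (v : var) (C : term) : Prop :=
  match C with
  | Var _ => False
  | Lam x A => x = v \/ bound_in v A
  | App A B => bound_in v A \/ bound_in v B
  end.

(* v' in FV(vA) = {v} u FV(A) *)
Definition in_FV_vA (v' v : var) (A : term) : Prop := v' = v \/ free_in v' A.

Fixpoint graft (A : term) (v : var) (B : term) : term :=
  match A with
  | Var x => if Nat.eqb x v then B else Var x
  | App A1 A2 => App (graft A1 v B) (graft A2 v B)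
  | Lam x A1 => if Nat.eqb x v then Lam x A1 else Lam x (graft A1 v B)
  end.

Inductive alpha1 : term -> term -> Prop :=
| alpha1_rule : forall v v' A,
    ~ in_FV_vA v' v A -> ~ bound_in v A -> ~ bound_in v' A ->
    alpha1 (Lam v A) (Lam v' (graft A v (Var v')))
| alpha1_appl : forall A A' C, alpha1 A A' -> alpha1 (App A C) (App A' C)
| alpha1_appr : forall A A' C, alpha1 A A' -> alpha1 (App C A) (App C A')
| alpha1_lam : forall u A A', alpha1 A A' -> alpha1 (Lam u A) (Lam u A').

Definition alpha_star : relation term := clos_refl_trans term alpha1.
Definition alpha_eq : relation term := clos_refl_sym_trans term alpha1.

(* Grafting a variable [v'] for [v] and then [v] back for [v'] is the identity as long as
   neither variable is ever bound in [A] and [v'] does not occur free in it: without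
   binders for [v] or [v'], every grafting reaches every occurrence, and the only
   occurrences of [v'] after the first grafting are the former occurrences of [v].
   Since the side conditions of the alpha' rule survive the renaming, the rule can be
   applied backwards, so [->alpha'] is symmetric; closures of a symmetric relation
   are symmetric, which collapses the reflexive-transitive closure onto the
   equivalence closure. *)

From Stdlib Require Import Relations Arith.

Section SymmetricClosures.

Variables (A : Type) (R : relation A).
Hypothesis R_sym : symmetric A R.

Lemma clos_rt_sym : symmetric A (clos_refl_trans A R).
Proof.
  intros x y Hxy; induction Hxy as [x y Hxy | x | x y z _ IHxy _ IHyz].
  - apply rt_step, R_sym, Hxy.
  - apply rt_refl.
  - apply rt_trans with y; assumption.
Qed.

Lemma clos_rst_clos_rt : inclusion A (clos_refl_sym_trans A R) (clos_refl_trans A R).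
Proof.
  intros x y Hxy; induction Hxy as [x y Hxy | x | x y _ IH | x y z _ IHxy _ IHyz].
  - apply rt_step, Hxy.
  - apply rt_refl.
  - apply clos_rt_sym, IH.
  - apply rt_trans with y; assumption.
Qed.

End SymmetricClosures.

Lemma bound_in_graft_var (A : term) (v w u : var) :
  bound_in u (graft A v (Var w)) <-> bound_in u A.
Proof.
  induction A as [x | x A IHA | A1 IHA1 A2 IHA2]; simpl.
  - destruct (Nat.eqb x v); simpl; tauto.
  - destruct (Nat.eqb x v); simpl; rewrite ?IHA; tauto.
  - rewrite IHA1, IHA2; tauto.
Qed.

Lemma not_free_in_graft_var (A : term) (v w : var) :
  w <> v -> ~ free_in v (graft A v (Var w)).
Proof.
  intros Hwv; induction A as [x | x A IHA | A1 IHA1 A2 IHA2]; simpl.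
  - destruct (Nat.eqb_spec x v); simpl; congruence.
  - destruct (Nat.eqb_spec x v); simpl; tauto.
  - tauto.
Qed.

Lemma graft_varK (A : term) (v v' : var) :
  ~ in_FV_vA v' v A -> ~ bound_in v A -> ~ bound_in v' A ->
  graft (graft A v (Var v')) v' (Var v) = A.
Proof.
  unfold in_FV_vA; induction A as [x | x A IHA | A1 IHA1 A2 IHA2];
    simpl; intros Hfree Hv Hv'.
  - destruct (Nat.eqb_spec x v) as [-> | Hxv]; simpl.
    + rewrite Nat.eqb_refl; reflexivity.
    + destruct (Nat.eqb_spec x v'); [tauto | reflexivity].
  - destruct (Nat.eqb_spec x v); [tauto |].
    simpl; destruct (Nat.eqb_spec x v'); [tauto |].
    f_equal; apply IHA; tauto.
  - f_equal; [apply IHA1 | apply IHA2]; tauto.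
Qed.

Lemma alpha1_sym : symmetric term alpha1.
Proof.
  intros A B HAB; induction HAB as [v v' A Hfree Hv Hv' | | |].
  - rewrite <- (graft_varK A v v' Hfree Hv Hv') at 2.
    unfold in_FV_vA in *.
    apply alpha1_rule; rewrite ?bound_in_graft_var; try assumption.
    intros [-> | Hv_free]; [tauto |].
    revert Hv_free; apply not_free_in_graft_var; intros ->; tauto.
  - apply alpha1_appl; assumption.
  - apply alpha1_appr; assumption.
  - apply alpha1_lam; assumption.
Qed.

Theorem lemma4p4 :
  (forall (A : term) (v v' : var),
      ~ in_FV_vA v' v A -> ~ bound_in v A -> ~ bound_in v' A ->
      graft (graft A v (Var v')) v' (Var v) = A) /\
  (forall A B : term, alpha1 A B -> alpha1 B A) /\
  (forall A B : term, alpha_star A B -> alpha_star B A) /\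
  (forall A B : term, alpha_star A B <-> alpha_eq A B).
Proof.
  split; [exact graft_varK |].
  split; [exact alpha1_sym |].
  split; [exact (clos_rt_sym term alpha1 alpha1_sym) |].
  intros A B; split.
  - apply clos_rt_clos_rst.
  - apply (clos_rst_clos_rt term alpha1 alpha1_sym).
Qed.
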